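(* Let $\mathbf{k}$ be a field and let $p\in\mathbf{k}[y]$ satisfy: for all $\alpha,\beta,\gamma\in\mathbf{k}$, if $\deg[p(y)-\alpha p(\beta y+\gamma)]\le 1$ then $\alpha=\beta=1$ and $\gamma=0$. Let $\sigma=(y,x)$, $t=(-x+p(y),y)$ and $f=(\sigma\circ t)^2\circ\sigma\circ(t\circ\sigma)^2$ in $\mathrm{Aut}(\mathbb{A}^2_{\mathbf{k}})$. Then the subgroup $\langle B,f\rangle$ generated by $B$ and $f$ is strictly contained in $\mathrm{Aut}(\mathbb{A}^2_{\mathbf{k}})$.
   Context: $\mathrm{Aut}(\mathbb{A}^2_{\mathbf{k}})$ is the group of polynomial automorphisms $(f_1,f_2)$ of the affine plane over $\mathbf{k}$, with composition $g\circ f=(g_1(f_1,f_2),g_2(f_1,f_2))$. $B=\{(ax+q(y),\,b'y+c'): a,b'\in\mathbf{k}^*,\ c'\in\mathbf{k},\ q\in\mathbf{k}[y]\}$ is the Jonquières subgroup. *)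

From HB Require Import structures.
From mathcomp Require Import all_boot all_order all_algebra.
From mathcomp Require Import mpoly.
Set Implicit Arguments. Unset Strict Implicit. Unset Printing Implicit Defensive.
Import GRing.Theory.
Local Open Scope ring_scope.

(* Bivariate polynomials k[x,y]: variable x = 'X_0, y = 'X_1. *)
Definition pol2 (k : fieldType) := {mpoly k[2]}.
Definition endo2 (k : fieldType) := (pol2 k * pol2 k)%type.

Definition X2 (k : fieldType) : pol2 k := 'X_(@ord0 1).
Definition Y2 (k : fieldType) : pol2 k := 'X_(@ord_max 1).

Definition comp2 (k : fieldType) (g f : endo2 k) : endo2 k :=
  (comp_mpoly [tuple f.1; f.2] g.1, comp_mpoly [tuple f.1; f.2] g.2).

Definition id2 (k : fieldType) : endo2 k := (X2 k, Y2 k).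

Definition inverse2 (k : fieldType) (f g : endo2 k) : Prop :=
  comp2 g f = id2 k /\ comp2 f g = id2 k.

Definition is_aut2 (k : fieldType) (f : endo2 k) : Prop :=
  exists g, inverse2 f g.

Definition polY (k : fieldType) (q : {poly k}) : pol2 k :=
  \sum_(i < size q) q`_i *: Y2 k ^+ i.

Definition in_B (k : fieldType) (h : endo2 k) : Prop :=
  exists (a b' c' : k) (q : {poly k}), a != 0 /\ b' != 0 /\
    h = (a *: X2 k + polY q, b' *: Y2 k + c'%:MP).

(* subgroup of Aut(A^2) generated by the set S (S assumed inside Aut) *)
Inductive gen2 (k : fieldType) (S : endo2 k -> Prop) : endo2 k -> Prop :=
  | gen2_base h : S h -> gen2 S h
  | gen2_id : gen2 S (id2 k)
  | gen2_comp g h : gen2 S g -> gen2 S h -> gen2 S (comp2 g h)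
  | gen2_inv h g : gen2 S h -> inverse2 h g -> gen2 S g.

Definition sigma2 (k : fieldType) : endo2 k := (Y2 k, X2 k).
Definition t2 (k : fieldType) (p : {poly k}) : endo2 k := (- X2 k + polY p, Y2 k).

Definition f44 (k : fieldType) (p : {poly k}) : endo2 k :=
  let st := comp2 (sigma2 k) (t2 p) in
  let ts := comp2 (t2 p) (sigma2 k) in
  comp2 (comp2 st st) (comp2 (sigma2 k) (comp2 ts ts)).

From HB Require Import structures.
From mathcomp Require Import all_boot all_order all_algebra.
From mathcomp Require Import mpoly.
From mathcomp Require Import zify ring.
From Stdlib Require List.
Import List (Forall, Forall_cons, Forall_nil, Forall_app, Forall_cons_iff).
Import GRing.Theory.
Set Implicit Arguments. Unset Strict Implicit. Unset Printing Implicit Defensive.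
Local Open Scope ring_scope.

(* Since f is an involution, every element of <B, f> lies in B or equals
   b0 f b1 f ... f bn with all b_i in B and b1, ..., b(n-1) nontrivial.
   Write f = (s t)^2 s (t s)^2 with s = sigma.  The hypothesis on p is what
   allows every inner block  s t s t s b s t s t  (b in B, b <> 1) to be
   rewritten as a product of factors  s g  with g = (a x + q(y), b' y + c) in B
   and deg q >= 2.  Composing on the left with such a factor strictly raises
   the degree of the second component and keeps it dominant.  So if sigma were
   such a word, then b0 W = id for some W whose second component has degree
   at least 2, which is impossible for b0 in B.  Hence the automorphism sigma
   is not in <B, f>. *)

Lemma comp_mpolyA (R : comNzRingType) (n m l : nat) (lq : n.-tuple {mpoly R[m]})
    (lr : m.-tuple {mpoly R[l]}) (p : {mpoly R[n]}) :
  p \mPo lq \mPo lr = p \mPo map_tuple (comp_mpoly lr) lq.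
Proof.
rewrite (comp_mpolyEX p lq) (comp_mpolyEX p) raddf_sum; apply: eq_bigr => m' _.
rewrite /= comp_mpolyZ !comp_mpolyX rmorph_prod; congr (_ *: _).
by apply: eq_bigr => i _; rewrite rmorphXn tnth_map.
Qed.

Lemma comp_mpoly_horner_alg (R : comNzRingType) (n m : nat) (lq : n.-tuple {mpoly R[m]})
    (u : {mpoly R[n]}) (q : {poly R}) :
  horner_alg u q \mPo lq = horner_alg (u \mPo lq) q.
Proof.
elim/poly_ind: q => [|q c IHq]; first by rewrite !rmorph0.
by rewrite !rmorphD !rmorphM /= IHq !horner_algX !horner_algC !alg_mpolyC comp_mpolyC.
Qed.

Lemma horner_alg_comp (R : comNzRingType) (n : nat) (u : {mpoly R[n]}) (p q : {poly R}) :
  horner_alg u (p \Po q) = horner_alg (horner_alg u q) p.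
Proof. by rewrite /horner_alg /horner_morph /= map_comp_poly horner_comp. Qed.

Lemma horner_alg_affine (R : comNzRingType) (n : nat) (u : {mpoly R[n]}) (e d : R) :
  horner_alg u (e *: 'X + d%:P) = e *: u + d%:MP.
Proof. by rewrite rmorphD /= linearZ /= horner_algX horner_algC mulr_algl alg_mpolyC. Qed.

Lemma msize_gt1 (R : nzRingType) (n m : nat) (u : {mpoly R[n]}) (lq lr : n.-tuple {mpoly R[m]}) :
  u \mPo lq != u \mPo lr -> (1 < msize u)%N.
Proof. by apply: contraR; rewrite -leqNgt => /msize1_polyC ->; rewrite !comp_mpolyC. Qed.

Lemma msize_addl (R : nzRingType) (n : nat) (u v : {mpoly R[n]}) :
  (msize v < msize u)%N -> msize (u + v) = msize u.
Proof.
move=> lt_vu; apply/eqP; rewrite eqn_leq; apply/andP; split.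
  by rewrite (leq_trans (msizeD_le _ _)) // geq_max leqnn ltnW.
have := msizeD_le (u + v) (- v); rewrite addrK msizeN leq_max => /orP[//|le_uv].
by move: (leq_ltn_trans le_uv lt_vu); rewrite ltnn.
Qed.

Lemma msize_affine (R : fieldType) (n : nat) (u : {mpoly R[n]}) (b c : R) :
  b != 0 -> (1 < msize u)%N -> msize (b *: u + c%:MP) = msize u.
Proof. by move=> b_nz u_gt1; rewrite msize_addl msizeZ // msizeC (leq_ltn_trans (leq_b1 _)). Qed.

Lemma msize_horner_alg (R : idomainType) (n : nat) (u : {mpoly R[n]}) (q : {poly R}) :
  q != 0 -> (1 < msize u)%N ->
  msize (horner_alg u q) = ((size q).-1 * (msize u).-1).+1.
Proof.
move=> + u_gt1; elim/poly_ind: q => [|q c IHq]; first by rewrite eqxx.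
have u_nz : u != 0 by rewrite -msize_poly_eq0 -lt0n ltnW.
have [-> | q_nz _] := eqVneq q 0.
  by rewrite mul0r add0r polyC_eq0 => c_nz; rewrite horner_algC alg_mpolyC msizeC size_polyC c_nz.
have hq_nz : horner_alg u q != 0 by rewrite -msize_poly_eq0 IHq.
rewrite size_MXaddC (negbTE q_nz) rmorphD rmorphM /= horner_algX horner_algC alg_mpolyC.
rewrite msize_addl (msizeM hq_nz u_nz) IHq //; last first.
  by rewrite msizeC (leq_ltn_trans (leq_b1 _)) // addSn /= ltn_addl.
move: (size q) (msize u) (size_poly_gt0 q) u_gt1; rewrite q_nz => -[|s] [|[|m']] //= _ _.
by rewrite mulSn addnC addSn.
Qed.

Lemma size_affine_le2 (R : nzRingType) (e d : R) : (size (e *: 'X + d%:P)%R <= 2)%N.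
Proof.
rewrite (leq_trans (size_polyD _ _)) // geq_max size_polyC (leq_trans (leq_b1 _)) //.
by rewrite (leq_trans (size_scale_leq _ _)) ?size_polyX.
Qed.

Lemma size_le2_polyE (R : nzRingType) (q : {poly R}) :
  (size q <= 2)%N -> q = q`_1 *: 'X + (q`_0)%:P.
Proof.
move=> q_le2; apply/polyP => -[|[|i]];
  rewrite coefD coefZ coefX coefC ?mulr0 ?mulr1 ?add0r ?addr0 //=.
by rewrite nth_default // (leq_trans q_le2).
Qed.

Lemma size_comp_affine (R : idomainType) (q : {poly R}) (b c : R) :
  b != 0 -> size (q \Po (b *: 'X + c%:P)) = size q.
Proof.
move=> b_nz; rewrite size_comp_poly2 // size_addl size_scale ?size_polyX //.
by rewrite size_polyC; case: (c != 0).
Qed.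

Section ProductsOfGenerators.
Local Open Scope group_scope.
Variables (G : monoidType) (S : G -> Prop).
Hypothesis S_rinv : forall x, S x -> exists2 y, S y & x * y = 1.

Lemma prod_rinv gs : Forall S gs ->
  exists2 hs, Forall S hs & \prod_(g <- gs) g * \prod_(h <- hs) h = 1.
Proof.
elim=> {gs} [|x gs Sx _ [hs Shs gsK]]; first by exists [::]; [constructor | rewrite !big_nil mulg1].
have [y Sy xyK] := S_rinv Sx.
exists (hs ++ [:: y]); first by apply/Forall_app; split; last constructor.
by rewrite big_cons big_cat big_seq1 /= mulgA -(mulgA x) gsK mulg1.
Qed.

End ProductsOfGenerators.

Section AmalgamNormalForm.
Local Open Scope group_scope.
Variables (G : monoidType) (B : G -> Prop) (f : G).
Hypotheses (B1 : B 1) (BM : forall x y, B x -> B y -> B (x * y)) (fK : f * f = 1).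

Lemma prod_normal_form gs : Forall (fun g => B g \/ g = f) gs ->
  B (\prod_(g <- gs) g) \/
  exists b0 bs bn, [/\ B b0, Forall (fun b => B b /\ b != 1) bs, B bn &
    \prod_(g <- gs) g = b0 * \prod_(b <- bs) (f * b) * (f * bn)].
Proof.
elim=> {gs} [|g gs [Bg|->] _ [Bgs|[b0 [bs [bn [Bb0 Lbs Bbn gsE]]]]]].
- by left; rewrite big_nil.
- by left; rewrite big_cons; apply: BM.
- by right; exists (g * b0), bs, bn; split; rewrite ?big_cons ?gsE ?mulgA //; apply: BM.
- by right; exists 1, [::], (\prod_(g <- gs) g); split; rewrite ?big_cons ?big_nil ?mul1g ?mulg1.
case: (eqVneq b0 1) gsE => [-> | b0_nt] gsE; last first.
  right; exists 1, (b0 :: bs), bn; split => //; first exact: Forall_cons.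
  by rewrite !big_cons gsE !mulgA mul1g.
case: bs Lbs gsE => [|b1 bs] Lbs gsE.
  by left; rewrite big_cons gsE big_nil !mulg1 mul1g mulgA fK mul1g.
have /Forall_cons_iff[[Bb1 _] Lbs'] := Lbs.
right; exists b1, bs, bn; split => //.
by rewrite big_cons gsE big_cons mul1g !mulgA fK mul1g.
Qed.

End AmalgamNormalForm.

Section PingPong.
Local Open Scope group_scope.
Variables (G : monoidType) (s t : G).

Lemma sandwichE x :
  s * t * s * t * s * x * s * t * s * t = \prod_(g <- [:: t; t; x; t; t]) (s * g).
Proof. by rewrite !big_cons big_nil mulg1 !mulgA. Qed.

Lemma sandwich_split x a1 a2 : s * x * s = a1 * s * a2 ->
  s * t * s * t * s * x * s * t * s * t = \prod_(g <- [:: t; t * a1; a2 * t; t]) (s * g).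
Proof.
move=> sxsE; have -> : s * t * s * t * s * x * s * t * s * t =
    s * t * s * t * (s * x * s) * (t * s * t) by rewrite !mulgA.
by rewrite sxsE !big_cons big_nil mulg1 !mulgA.
Qed.

Lemma sandwich_conj x :
  s * t * s * t * s * x * s * t * s * t = \prod_(g <- [:: t; t * (s * x * s) * t; t]) (s * g).
Proof. by rewrite !big_cons big_nil mulg1 !mulgA. Qed.

Lemma sandwich_conj2 x : s * t * s * t * s * x * s * t * s * t =
  \prod_(g <- [:: t * (s * (t * (s * x * s) * t) * s) * t]) (s * g).
Proof. by rewrite big_seq1 !mulgA. Qed.

Variables (B good : G -> Prop) (f : G).
Hypotheses (sK : s * s = 1) (fE : f = s * t * (s * t) * (s * (t * s * (t * s)))).
Hypothesis good_t : good t.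
(* f b f = (s t s t) * (s t s t s b s t s t) * (s t s t s): only the middle
   factor has to be brought to the form of a product of  s * g,  g good. *)
Hypothesis sandwich_good : forall x, B x -> x != 1 ->
  exists2 ls, Forall good ls & s * t * s * t * s * x * s * t * s * t = \prod_(g <- ls) (s * g).

Lemma ping_pong bs : Forall (fun b => B b /\ b != 1) bs ->
  exists2 ls, Forall good ls & \prod_(b <- bs) (f * b) * f = \prod_(g <- t :: t :: ls) (s * g) * s.
Proof.
elim=> {bs} [|b bs [Bb b_nt] _ [ls Gls bsE]].
  exists [:: t; t]; first by repeat constructor.
  by rewrite !big_cons !big_nil mul1g mulg1 fE !mulgA.
have [lb Glb bE] := sandwich_good Bb b_nt.
exists (lb ++ ls); first exact/Forall_app.
by rewrite big_cons -mulgA bsE !big_cons big_cat /= -bE fE !mulgA.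
Qed.

Lemma ping_pong_conj b0 bs bn : Forall (fun b => B b /\ b != 1) bs ->
  b0 * \prod_(b <- bs) (f * b) * (f * bn) = s ->
  exists2 ls, Forall good ls & b0 * (\prod_(g <- t :: t :: ls) (s * g) * (s * bn * s)) = 1.
Proof.
move=> /ping_pong[ls Gls bsE] wE; exists ls => //.
have {}wE : b0 * (\prod_(g <- t :: t :: ls) (s * g) * s) * bn = s by rewrite -bsE -wE !mulgA.
by rewrite -[RHS]sK -[X in _ = X * s]wE !mulgA.
Qed.

Lemma palindromeK : t * t = 1 -> f * f = 1.
Proof.
move=> tK; rewrite fE -!mulgA.
by do 4 rewrite (mulgA s s) sK mul1g (mulgA t t) tK mul1g; rewrite sK.
Qed.

End PingPong.

Section Jonquieres.
Variable k : fieldType.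
Implicit Types (a b c d e : k) (q : {poly k}) (g h : endo2 k).

Lemma comp2A g h (w : endo2 k) : comp2 g (comp2 h w) = comp2 (comp2 g h) w.
Proof.
have pairE (u v : pol2 k) : map_tuple (comp_mpoly [tuple w.1; w.2]) [tuple u; v] =
    [tuple u \mPo [tuple w.1; w.2]; v \mPo [tuple w.1; w.2]].
  by apply: eq_from_tnth => i; rewrite tnth_map; case: i => -[|[|]].
by rewrite /comp2 /= !comp_mpolyA pairE.
Qed.

Lemma comp2_idl h : comp2 (id2 k) h = h.
Proof. by case: h => u v; rewrite /comp2 /id2 /X2 /Y2 /= !comp_mpolyXU. Qed.

Lemma comp2_idr h : comp2 h (id2 k) = h.
Proof.
have idE : [tuple X2 k; Y2 k] = [tuple 'X_i | i < 2].
  apply: eq_from_tnth => -[[|[|]] ?] //;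
  by rewrite tnth_map tnth_ord_tuple (tnth_nth 0) /=; congr 'X__; apply: val_inj.
by case: h => u v; rewrite /comp2 /= idE !comp_mpoly_id.
Qed.

HB.instance Definition _ := Choice.on (endo2 k).
HB.instance Definition _ := isMonoid.Build (endo2 k) comp2A comp2_idl comp2_idr.

Lemma comp2E g h : comp2 g h = (g * h)%g. Proof. by []. Qed.
Lemma id2E : id2 k = 1%g. Proof. by []. Qed.

Lemma gen2_prod (S : endo2 k -> Prop) h :
  (forall g, S g -> exists2 g', S g' & (g * g')%g = 1%g) ->
  gen2 S h -> exists2 gs, Forall S gs & h = (\prod_(g <- gs) g)%g.
Proof.
move=> S_rinv; elim=> {h} [h Sh | | g h _ [gs Sgs ->] _ [hs Shs ->] | h g _ [gs Sgs ->] [+ _]].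
- by exists [:: h]; [exact: Forall_cons _ Sh (Forall_nil _) | rewrite big_seq1].
- by exists [::]; [exact: Forall_nil | rewrite big_nil].
- by exists (gs ++ hs); [exact/Forall_app | rewrite big_cat].
rewrite comp2E id2E => gK; have [hs Shs gsK] := prod_rinv S_rinv Sgs.
by exists hs; rewrite // -[LHS]mulg1 -{1}gsK mulgA gK mul1g.
Qed.

Definition jonq a b c q : endo2 k := (a *: X2 k + horner_alg (Y2 k) q, b *: Y2 k + c%:MP).

Lemma polYE q : polY q = horner_alg (Y2 k) q.
Proof.
rewrite /polY /horner_alg /horner_morph /= horner_coef size_map_poly.
by apply: eq_bigr => i _; rewrite coef_map /= mulr_algl.
Qed.

Lemma in_BP h : in_B h <-> exists a b c q, [/\ a != 0, b != 0 & h = jonq a b c q].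
Proof.
by split=> -[a [b [c [q]]]]; rewrite ?polYE => -[an [bn ->]]; exists a, b, c, q; rewrite ?polYE.
Qed.

Lemma jonq_comp a b c q h :
  (jonq a b c q * h)%g = (a *: h.1 + horner_alg h.2 q, b *: h.2 + c%:MP).
Proof.
case: h => u v; rewrite -comp2E /comp2 /jonq /= !raddfD /= !comp_mpolyZ comp_mpoly_horner_alg.
by rewrite /X2 /Y2 !comp_mpolyXU comp_mpolyC.
Qed.

Lemma jonqM a b c q a' b' c' q' :
  (jonq a b c q * jonq a' b' c' q')%g =
  jonq (a * a') (b * b') (b * c' + c) (a *: q' + (q \Po (b' *: 'X + c'%:P))).
Proof.
rewrite jonq_comp /jonq /=; congr (_, _).
  rewrite scalerDr scalerA !rmorphD /= linearZ /= horner_alg_comp horner_alg_affine.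
  by rewrite mulr_algl addrA.
by rewrite scalerDr scalerA -addrA mpolyCD mpolyCM mul_mpolyC.
Qed.

Lemma jonq1 : jonq 1 1 0 0 = 1%g.
Proof. by rewrite /jonq rmorph0 mpolyC0 !scale1r !addr0. Qed.

Lemma in_B1 : in_B (1%g : endo2 k).
Proof. by apply/in_BP; exists 1, 1, 0, 0; rewrite jonq1 oner_eq0. Qed.

Lemma in_BM g h : in_B g -> in_B h -> in_B (g * h)%g.
Proof.
move=> /in_BP[a [b [c [q [a_nz b_nz ->]]]]] /in_BP[a' [b' [c' [q' [a'_nz b'_nz ->]]]]].
by apply/in_BP; rewrite jonqM; do 4 eexists; split; last reflexivity; rewrite mulf_neq0.
Qed.

Lemma in_B_rinv g : in_B g -> exists2 h, in_B h & (g * h)%g = 1%g.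
Proof.
move=> /in_BP[a [b [c [q [a_nz b_nz ->]]]]].
pose c' := - (c / b); pose q' := - (a^-1 *: (q \Po (b^-1 *: 'X + c'%:P))).
exists (jonq a^-1 b^-1 c' q').
  by apply/in_BP; do 4 eexists; split; last reflexivity; rewrite invr_eq0.
rewrite jonqM -jonq1 !mulfV // mulrN mulrCA mulfV // mulr1 addNr.
by rewrite scalerN scalerA mulfV // scale1r addNr.
Qed.

Lemma sigma2_comp h : (sigma2 k * h)%g = (h.2, h.1).
Proof. by case: h => u v; rewrite -comp2E /comp2 /sigma2 /X2 /Y2 /= !comp_mpolyXU. Qed.

Lemma sigma2K : (sigma2 k * sigma2 k)%g = 1%g.
Proof. by rewrite sigma2_comp. Qed.

Lemma sigma2_notin_B : ~ in_B (sigma2 k).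
Proof.
move=> /in_BP[a [b [c [q [_ b_nz [_ XE]]]]]].
have := congr1 (fun u => msize (u \mPo [tuple X2 k; 0])) XE.
rewrite raddfD /= comp_mpolyZ comp_mpolyC /X2 /Y2 !comp_mpolyXU /= scaler0 add0r.
by rewrite msizeX mdeg1 msizeC; case: (c != 0).
Qed.

Lemma t2E p : t2 p = jonq (-1) 1 0 p.
Proof. by rewrite /t2 /jonq polYE scaleN1r scale1r addr0. Qed.

Lemma t2K p : (t2 p * t2 p)%g = 1%g.
Proof.
by rewrite t2E jonqM -jonq1 mulrN1 opprK mulr1 mulr0 addr0 scaleN1r scale1r addr0 comp_polyXr addNr.
Qed.

(* msize is the total degree plus one *)
Definition snd_dominates h := (1 < msize h.2)%N /\ (msize h.1 <= msize h.2)%N.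

Definition nonaffine_jonq g :=
  exists a b c q, [/\ a != 0, b != 0, (2 < size q)%N & g = jonq a b c q].

Lemma msize_X2 : msize (X2 k) = 2.
Proof. by rewrite msizeX mdeg1. Qed.

Lemma msize_Y2 : msize (Y2 k) = 2.
Proof. by rewrite msizeX mdeg1. Qed.

Lemma sigma2_nonaffine_comp g h : nonaffine_jonq g -> snd_dominates h ->
  snd_dominates (sigma2 k * g * h)%g /\ (2 < msize (sigma2 k * g * h)%g.2)%N.
Proof.
move=> [a [b [c [q [a_nz b_nz q_gt2 ->]]]]] [h2_gt1 h12].
rewrite -mulgA sigma2_comp jonq_comp /=.
have q_nz : q != 0 by rewrite -size_poly_gt0 (ltn_trans _ q_gt2).
have lt_h2q : (msize h.2 < msize (horner_alg h.2 q))%N.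
  rewrite msize_horner_alg //.
  by move: (size q) (msize h.2) q_gt2 h2_gt1 => [|[|[|n]]] // [|[|m]] //= _ _; nia.
rewrite /snd_dominates /= msize_affine // addrC msize_addl; last first.
  exact: leq_ltn_trans (msizeZ_le _ _) (leq_ltn_trans h12 lt_h2q).
have h2q_gt2 := leq_ltn_trans h2_gt1 lt_h2q.
by split; [split|]; rewrite ?(ltnW lt_h2q) ?h2q_gt2 ?(ltn_trans _ h2q_gt2).
Qed.

Lemma snd_dominates_chain ls h : Forall nonaffine_jonq ls -> snd_dominates h ->
  snd_dominates (\prod_(g <- ls) (sigma2 k * g) * h)%g.
Proof.
elim=> {ls} [|g ls g_na _ IH] h_dom; first by rewrite big_nil mul1g.
by rewrite big_cons -mulgA; case: (sigma2_nonaffine_comp g_na (IH h_dom)).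
Qed.

Lemma msize_chain g ls h : Forall nonaffine_jonq (g :: ls) -> snd_dominates h ->
  (2 < msize (\prod_(g' <- g :: ls) (sigma2 k * g') * h)%g.2)%N.
Proof.
move=> /Forall_cons_iff[g_na ls_na] h_dom; rewrite big_cons -mulgA.
by case: (sigma2_nonaffine_comp g_na (snd_dominates_chain ls_na h_dom)).
Qed.

Lemma sigma2_conj_snd_dominates g : in_B g -> snd_dominates (sigma2 k * g * sigma2 k)%g.
Proof.
move=> /in_BP[a [b [c [q [a_nz b_nz ->]]]]].
rewrite -mulgA sigma2_comp jonq_comp /sigma2 /snd_dominates /= msize_affine ?msize_X2 //.
have u_gt1 : (1 < msize (a *: Y2 k + horner_alg (X2 k) q)%R)%N.
  apply: (@msize_gt1 _ _ _ _ [tuple 0; 0] [tuple 0; Y2 k]).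
  rewrite !raddfD /= !comp_mpolyZ !comp_mpoly_horner_alg /X2 /Y2 !comp_mpolyXU /= scaler0 add0r.
  rewrite eq_sym -subr_eq0 addrK scaler_eq0 negb_or a_nz /=.
  by rewrite -msize_poly_eq0 msizeX mdeg1.
by split.
Qed.

Lemma in_B_comp_neq1 g h : in_B g -> (2 < msize h.2)%N -> (g * h)%g != 1%g.
Proof.
move=> /in_BP[a [b [c [q [_ b_nz ->]]]]] h2_gt2; rewrite jonq_comp -id2E; apply/eqP => -[_].
move/(congr1 (fun u => msize u)); rewrite msize_affine ?(ltnW h2_gt2) // msize_Y2 => h2E.
by rewrite h2E in h2_gt2.
Qed.

Lemma nonaffine_jonqD a b c q (r : {poly k}) :
  a != 0 -> b != 0 -> (2 < size q)%N -> (size r <= 2)%N -> nonaffine_jonq (jonq a b c (q + r)).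
Proof.
by move=> a_nz b_nz q_gt2 r_le2; exists a, b, c, (q + r); rewrite size_addl // (leq_trans _ q_gt2).
Qed.

Lemma sigma2_conj_jonq a b c e d : (sigma2 k * jonq a b c (e *: 'X + d%:P) * sigma2 k)%g =
  (b *: X2 k + c%:MP, a *: Y2 k + (e *: X2 k + d%:MP)).
Proof. by rewrite -mulgA sigma2_comp jonq_comp /sigma2 /= horner_alg_affine. Qed.

Lemma sigma2_conj_triangular a b c d :
  (sigma2 k * jonq a b c d%:P * sigma2 k)%g = jonq b a d c%:P.
Proof.
have := sigma2_conj_jonq a b c 0 d; rewrite !scale0r !add0r => ->.
by rewrite /jonq horner_algC alg_mpolyC.
Qed.

Lemma sigma2_conj_shear a b c e d : e != 0 ->
  (sigma2 k * jonq a b c (e *: 'X + d%:P) * sigma2 k)%g =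
  (jonq (- (a * (b / e))) 1 d ((b / e) *: 'X + c%:P) * sigma2 k * jonq e 1 0 (a *: 'X))%g.
Proof.
move=> e_nz; rewrite sigma2_conj_jonq -mulgA sigma2_comp !jonq_comp /=.
rewrite horner_alg_affine linearZ /= horner_algX -{1}(divfK e_nz b).
by congr (_, _); rewrite -!mul_mpolyC ?mpolyCM ?mpolyCN; ring.
Qed.

Definition rigid (p : {poly k}) := forall alpha beta gamma : k,
  (size (p - alpha *: (p \Po (beta *: 'X + gamma%:P)))%R <= 2)%N ->
  alpha = 1 /\ beta = 1 /\ gamma = 0.

Section Rigid.
Variable p : {poly k}.
Hypothesis p_rigid : rigid p.
Local Notation s := (sigma2 k).
Local Notation t := (t2 p).

Lemma rigid_size : (2 < size p)%N.
Proof.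
rewrite ltnNge; apply/negP => p_le2.
have := @p_rigid 0 0 0; rewrite scale0r subr0 => /(_ p_le2)[/eqP].
by rewrite eq_sym oner_eq0.
Qed.

Lemma rigid_conj a b c d : a != 0 ->
  (size (p \Po (b *: 'X + c%:P) - a *: p - d%:P)%R <= 2)%N -> [/\ a = 1, b = 1 & c = 0].
Proof.
set r := _ - _ - _ => a_nz r_le2.
have rE : p - a^-1 *: (p \Po (b *: 'X + c%:P)) = - a^-1 *: (r + d%:P).
  by rewrite /r subrK scalerBr !scaleNr scalerA mulVf // scale1r opprK addrC.
have [ainv1 [-> ->]] : a^-1 = 1 /\ b = 1 /\ c = 0.
  apply: p_rigid; rewrite rE (leq_trans (size_scale_leq _ _)) // (leq_trans (size_polyD _ _)) //.
  by rewrite geq_max r_le2 size_polyC (leq_trans (leq_b1 _)).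
by split=> //; rewrite -[a]invrK ainv1 invr1.
Qed.

Lemma nonaffine_t : nonaffine_jonq t.
Proof. by exists (-1), 1, 0, p; rewrite t2E oppr_eq0 oner_eq0 rigid_size. Qed.

Lemma t2_conj_triangular a b c d :
  (t * jonq a b c d%:P * t)%g = jonq a b c (p \Po (b *: 'X + c%:P) - a *: p - d%:P).
Proof.
rewrite t2E !jonqM scale1r polyC0 !addr0 comp_polyXr.
by congr jonq; rewrite -?mul_polyC; ring.
Qed.

Lemma t2_conj_triangular_cases a b c d : a != 0 -> b != 0 ->
  nonaffine_jonq (t * jonq a b c d%:P * t)%g \/
  [/\ a = 1, b = 1, c = 0 & (t * jonq a b c d%:P * t)%g = jonq 1 1 0 (- d)%:P].
Proof.
move=> a_nz b_nz; rewrite t2_conj_triangular.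
have [r_gt2 | r_le2] := ltnP 2 (size (p \Po (b *: 'X + c%:P) - a *: p - d%:P)%R).
  by left; exists a, b, c, (p \Po (b *: 'X + c%:P) - a *: p - d%:P).
have [-> -> ->] := rigid_conj a_nz r_le2; right; split=> //.
by rewrite !scale1r polyC0 addr0 comp_polyXr subrr sub0r polyCN.
Qed.

Lemma sandwich_shear a b c e d : a != 0 -> b != 0 -> e != 0 ->
  exists2 ls, Forall nonaffine_jonq ls &
    (s * t * s * t * s * jonq a b c (e *: 'X + d%:P) * s * t * s * t)%g =
    (\prod_(g <- ls) (s * g))%g.
Proof.
move=> a_nz b_nz e_nz; have r_nz : b / e != 0 by rewrite mulf_neq0 ?invr_eq0.
pose a1 := jonq (- (a * (b / e))) 1 d ((b / e) *: 'X + c%:P); pose a2 := jonq e 1 0 (a *: 'X).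
have ta1_na : nonaffine_jonq (t * a1)%g.
  rewrite t2E jonqM [_ + (p \Po _)]addrC; apply: nonaffine_jonqD.
  - by rewrite mulN1r opprK mulf_neq0.
  - by rewrite mulr1 oner_eq0.
  - by rewrite size_comp_affine ?oner_eq0 // rigid_size.
  - by rewrite scaleN1r size_opp size_affine_le2.
have a2t_na : nonaffine_jonq (a2 * t)%g.
  rewrite t2E jonqM; apply: nonaffine_jonqD.
  - by rewrite mulrN1 oppr_eq0.
  - by rewrite mulr1 oner_eq0.
  - by rewrite size_scale // rigid_size.
  - by rewrite scale1r polyC0 addr0 comp_polyXr (leq_trans (size_scale_leq _ _)) ?size_polyX.
have t_na := nonaffine_t.
exists [:: t; (t * a1)%g; (a2 * t)%g; t]; first by do !apply: Forall_cons.
exact/sandwich_split/sigma2_conj_shear.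
Qed.

(* If t (s x s) t is still affine, rigidity makes x a translation (x, y + c);
   one more conjugation by s and t is nonaffine unless c = 0. *)
Lemma sandwich_triangular a b c d : a != 0 -> b != 0 -> jonq a b c d%:P != 1%g ->
  exists2 ls, Forall nonaffine_jonq ls &
    (s * t * s * t * s * jonq a b c d%:P * s * t * s * t)%g = (\prod_(g <- ls) (s * g))%g.
Proof.
move=> a_nz b_nz x_nt; have t_na := nonaffine_t.
have [y_na | [b1 a1 d0 yE]] := t2_conj_triangular_cases d c b_nz a_nz.
  rewrite -sigma2_conj_triangular in y_na.
  exists [:: t; (t * (s * jonq a b c d%:P * s) * t)%g; t]; last exact: sandwich_conj.
  exact: Forall_cons _ t_na (Forall_cons _ y_na (Forall_cons _ t_na (Forall_nil _))).
subst a b d.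
have [z_na | [_ _ /eqP]] := t2_conj_triangular_cases (- c) 0 (oner_neq0 k) (oner_neq0 k).
  rewrite -(sigma2_conj_triangular 1 1 0 (- c)) -yE -(sigma2_conj_triangular 1 1 c 0) in z_na.
  pose x := jonq 1 1 c 0%:P. (* named outside %g, where 1 would be the monoid unit *)
  exists [:: (t * (s * (t * (s * x * s) * t) * s) * t)%g]; last exact: sandwich_conj2.
  exact: Forall_cons _ z_na (Forall_nil _).
by rewrite oppr_eq0 => /eqP c0; move: x_nt; rewrite c0 polyC0 jonq1 eqxx.
Qed.

Lemma sandwich_nonaffine x : in_B x -> x != 1%g ->
  exists2 ls, Forall nonaffine_jonq ls &
    (s * t * s * t * s * x * s * t * s * t)%g = (\prod_(g <- ls) (s * g))%g.
Proof.
move=> /in_BP[a [b [c [q [a_nz b_nz ->]]]]] x_nt.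
have [q_gt2 | /size_le2_polyE qE] := ltnP 2 (size q).
  have t_na := nonaffine_t; have x_na : nonaffine_jonq (jonq a b c q) by exists a, b, c, q.
  exists [:: t; t; jonq a b c q; t; t]; last exact: sandwichE.
  by do !apply: Forall_cons.
move: x_nt; rewrite qE; have [e0 | e_nz] := eqVneq q`_1 0.
  by rewrite e0 scale0r add0r; exact: sandwich_triangular.
by move=> _; exact: sandwich_shear.
Qed.

Lemma f44E : f44 p = (s * t * (s * t) * (s * (t * s * (t * s))))%g.
Proof. by []. Qed.

Lemma sigma2_notin_gen : ~ gen2 (fun g => in_B g \/ g = f44 p) s.
Proof.
have fK := palindromeK sigma2K f44E (t2K p).
have gen_rinv g : in_B g \/ g = f44 p -> exists2 g', in_B g' \/ g' = f44 p & (g * g')%g = 1%g.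
  case=> [/in_B_rinv[g' Bg' gg'] | ->]; first by exists g'; first left.
  by exists (f44 p); [right | exact: fK].
move=> /(gen2_prod gen_rinv)[gs gen_gs sE].
have [Bs | [b0 [bs [bn [Bb0 Lbs Bbn wE]]]]] := prod_normal_form in_B1 in_BM fK gen_gs.
  by apply: sigma2_notin_B; rewrite sE.
have t_na := nonaffine_t.
have [ls Lls /eqP] :=
  ping_pong_conj sigma2K f44E t_na sandwich_nonaffine Lbs (esym (etrans sE wE)).
apply/negP/in_B_comp_neq1 => //.
exact: msize_chain (Forall_cons _ t_na (Forall_cons _ t_na Lls)) (sigma2_conj_snd_dominates Bbn).
Qed.

End Rigid.
End Jonquieres.

Theorem proposition4p4 (k : fieldType) (p : {poly k}) :
  (forall alpha beta gamma : k,
     (size (p - alpha *: (p \Po (beta *: 'X + gamma%:P)))%R <= 2)%N ->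
     alpha = 1 /\ beta = 1 /\ gamma = 0) ->
  exists h : endo2 k, is_aut2 h /\
    ~ gen2 (fun g => in_B g \/ g = f44 p) h.
Proof.
move=> p_rigid; exists (sigma2 k); split; last exact: sigma2_notin_gen.
by exists (sigma2 k); split; exact: sigma2K.
Qed.
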